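(* Let $U\subseteq\mathbb{R}^8$ be open, let $\Theta\in C^\infty(U)$ satisfy the 4+4-dimensional TED equation $$\omega_{12}\omega_{34}+\omega_{23}\omega_{14}+\omega_{31}\omega_{24}=0\quad\text{on }U,$$ and assume $\omega_{12}\neq 0$ on $U$. Fix a constant $\lambda$ and put $D_i=\partial_{y^i}-\lambda\partial_{x^i}$ for $i=1,\dots,4$. Define the first-order operators $$X_3=\omega_{23}D_1+\omega_{31}D_2+\omega_{12}D_3,\qquad X_4=\omega_{24}D_1+\omega_{41}D_2+\omega_{12}D_4 .$$ The Lax pair $X_3\psi=0$, $X_4\psi=0$, written out as $$(\Theta_{x^1y^2}-\Theta_{x^2y^1})(\psi_{y^3}-\lambda\psi_{x^3})+(\Theta_{x^2y^3}-\Theta_{x^3y^2})(\psi_{y^1}-\lambda\psi_{x^1})+(\Theta_{x^3y^1}-\Theta_{x^1y^3})(\psi_{y^2}-\lambda\psi_{x^2})=0,$$ $$(\Theta_{x^1y^2}-\Theta_{x^2y^1})(\psi_{y^4}-\lambda\psi_{x^4})+(\Theta_{x^2y^4}-\Theta_{x^4y^2})(\psi_{y^1}-\lambda\psi_{x^1})+(\Theta_{x^4y^1}-\Theta_{x^1y^4})(\psi_{y^2}-\lambda\psi_{x^2})=0,$$ is then compatible. Precisely: there are smooth functions $\alpha,\beta$ on $U$ with $[X_3,X_4]=\alpha X_3+\beta X_4$.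
   Context: Coordinates on $\mathbb{R}^8$ are $(x^1,\dots,x^4,y^1,\dots,y^4)$, and subscripts denote partial derivatives. For $\Theta\in C^\infty(U)$ set $\omega_{ik}=\Theta_{x^iy^k}-\Theta_{x^ky^i}$, so that $\omega_{ik}=-\omega_{ki}$. The 4+4-dimensional TED equation is $\omega_{12}\omega_{34}+\omega_{23}\omega_{14}+\omega_{31}\omega_{24}=0$, i.e. the vanishing of the Pfaffian of the skew-symmetric $4\times4$ matrix $\omega=(\omega_{ik})$. *)

From Stdlib Require Import Reals ClassicalEpsilon.
From mathcomp Require Import ssreflect ssrfun ssrbool eqtype ssrnat seq fintype.
Set Implicit Arguments.
Unset Strict Implicit.

Open Scope R_scope.

(* Points of R^8; coordinate j : 'I_8.  x^i (i=1..4) is coordinate i-1,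
   y^i (i=1..4) is coordinate i+3. *)
Definition pt := 'I_8 -> R.

Definition xc (i : nat) : 'I_8 := inord (i.-1).
Definition yc (i : nat) : 'I_8 := inord (i + 3).

Definition shift (p : pt) (i : 'I_8) (t : R) : pt :=
  fun j => if j == i then p j + t else p j.

Definition is_open (U : pt -> Prop) : Prop :=
  forall p, U p -> exists eps, 0 < eps /\
    forall q : pt, (forall j, Rabs (q j - p j) < eps) -> U q.

Definition has_pd (f : pt -> R) (i : 'I_8) (p : pt) (l : R) : Prop :=
  derivable_pt_lim (fun t => f (shift p i t)) 0 l.

Definition ex_pd (f : pt -> R) (i : 'I_8) (p : pt) : Prop :=
  exists l, has_pd f i p l.

(* The partial derivative function (meaningful where it exists) *)
Definition pd (f : pt -> R) (i : 'I_8) : pt -> R :=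
  fun p => epsilon (inhabits 0) (fun l => has_pd f i p l).

(* iterated partial derivative: iter_pd [:: i1; ...; ik] f = d_i1 (... (d_ik f)) *)
Definition iter_pd (l : seq 'I_8) (f : pt -> R) : pt -> R :=
  foldr (fun i g => pd g i) f l.

Definition cont_on (U : pt -> Prop) (g : pt -> R) : Prop :=
  forall p, U p -> forall eps, 0 < eps -> exists d, 0 < d /\
    forall q, U q -> (forall j, Rabs (q j - p j) < d) -> Rabs (g q - g p) < eps.

Definition smooth_on (U : pt -> Prop) (f : pt -> R) : Prop :=
  forall l : seq 'I_8,
    (forall p, U p -> forall i, ex_pd (iter_pd l f) i p) /\ cont_on U (iter_pd l f).

Definition omega (Th : pt -> R) (i k : nat) : pt -> R :=
  fun p => pd (pd Th (xc i)) (yc k) p - pd (pd Th (xc k)) (yc i) p.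

Definition Dop (lam : R) (i : nat) (psi : pt -> R) : pt -> R :=
  fun p => pd psi (yc i) p - lam * pd psi (xc i) p.

Definition X3 (Th : pt -> R) (lam : R) (psi : pt -> R) : pt -> R :=
  fun p => omega Th 2 3 p * Dop lam 1 psi p + omega Th 3 1 p * Dop lam 2 psi p
           + omega Th 1 2 p * Dop lam 3 psi p.

Definition X4 (Th : pt -> R) (lam : R) (psi : pt -> R) : pt -> R :=
  fun p => omega Th 2 4 p * Dop lam 1 psi p + omega Th 4 1 p * Dop lam 2 psi p
           + omega Th 1 2 p * Dop lam 4 psi p.

(* Write X3 = sum_k a_k D_k and X4 = sum_k b_k D_k, with coefficient vectors
   a = (w23, w31, w12, 0) and b = (w24, w41, 0, w12).  The operators D_i commute
   on smooth functions, so [X3, X4] = sum_k (X3 b_k - X4 a_k) D_k is again first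
   order.  Its D_3 and D_4 coefficients are -X4(w12) and X3(w12), which forces
   alpha = -X4(w12)/w12 and beta = X3(w12)/w12.  For the D_1 and D_2 coefficients,
   the closedness relations D_j w_ik + D_i w_kj + D_k w_ji = 0 (symmetry of the
   third derivatives of Theta) show that w12 (X3 b_k - X4 a_k) - X3(w12) b_k
   + X4(w12) a_k equals +-(w12 D_l P - (D_l w12) P) for the Pfaffian P, and this
   vanishes because P = 0 on the open set U. *)

From Stdlib Require Import Reals Lra ClassicalEpsilon FunctionalExtensionality PropExtensionality.
From mathcomp Require Import ssreflect ssrfun ssrbool eqtype ssrnat seq fintype.
Open Scope R_scope.
Set Implicit Arguments.
Unset Strict Implicit.

Lemma shift0 p i : shift p i 0 = p.
Proof. apply: functional_extensionality => j; rewrite /shift; case: (j == i) => //; ring. Qed.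

Lemma shift_add p i s t : shift (shift p i s) i t = shift p i (s + t).
Proof. apply: functional_extensionality => j; rewrite /shift; case: (j == i) => //; ring. Qed.

Lemma shift_comm p i j s t : shift (shift p i s) j t = shift (shift p j t) i s.
Proof.
  apply: functional_extensionality => k; rewrite /shift.
  by case: (k == i); case: (k == j) => //; ring.
Qed.

Lemma shift_dist p i t j : Rabs (shift p i t j - p j) <= Rabs t.
Proof.
  rewrite /shift; case: (j == i).
  - by replace (p j + t - p j) with t by ring; lra.
  - by rewrite Rminus_diag Rabs_R0; apply: Rabs_pos.
Qed.

Lemma shift2_dist p a b s t j : Rabs (shift (shift p a s) b t j - p j) <= Rabs s + Rabs t.
Proof.
  have h1 := shift_dist (shift p a s) b t j; have h2 := shift_dist p a s j.
  have := Rabs_triang (shift (shift p a s) b t j - shift p a s j) (shift p a s j - p j).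
  by replace (_ - _ + (_ - _)) with (shift (shift p a s) b t j - p j) by ring; lra.
Qed.

Lemma has_pd_unique f i p l : has_pd f i p l -> pd f i p = l.
Proof.
  move=> H; rewrite /pd.
  have Heps : has_pd f i p (epsilon (inhabits 0) (fun l => has_pd f i p l)).
    by apply: (epsilon_spec (inhabits 0) (fun l => has_pd f i p l)); exists l.
  exact: uniqueness_limite Heps H.
Qed.

Lemma pd_spec f i p : ex_pd f i p -> has_pd f i p (pd f i p).
Proof. by move=> [l H]; rewrite (has_pd_unique H). Qed.

Lemma has_pd_open_ext U f g i p l : is_open U -> U p ->
  (forall q, U q -> f q = g q) -> has_pd f i p l -> has_pd g i p l.
Proof.
  move=> HU Hp Hfg H eps Heps.
  have [r [Hr Hball]] := HU p Hp.
  have [d Hd] := H eps Heps.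
  have Hm : 0 < Rmin d r by apply: Rmin_pos; [apply: cond_pos | lra].
  exists (mkposreal _ Hm) => h Hh0 /= Hh.
  have Hhd : Rabs h < d by apply: Rlt_le_trans Hh (Rmin_l _ _).
  have Hhr : Rabs h < r by apply: Rlt_le_trans Hh (Rmin_r _ _).
  have E1 : f (shift p i (0 + h)) = g (shift p i (0 + h)).
    apply/Hfg/Hball => j; rewrite Rplus_0_l.
    exact: Rle_lt_trans (shift_dist p i h j) Hhr.
  have E2 : f (shift p i 0) = g (shift p i 0) by rewrite shift0; exact: Hfg.
  by rewrite -E1 -E2; apply: Hd.
Qed.

Lemma pd_open_ext U f g i p : is_open U -> U p ->
  (forall q, U q -> f q = g q) -> pd f i p = pd g i p.
Proof.
  move=> HU Hp Hfg; rewrite /pd.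
  have -> : (fun l => has_pd f i p l) = (fun l => has_pd g i p l) => //.
  apply: functional_extensionality => l; apply: propositional_extensionality.
  by split; apply: has_pd_open_ext HU Hp _ => q Hq; rewrite Hfg.
Qed.

Lemma ex_pd_open_ext U f g i p : is_open U -> U p ->
  (forall q, U q -> f q = g q) -> ex_pd f i p -> ex_pd g i p.
Proof. move=> HU Hp Hfg [l Hl]; exists l; exact: has_pd_open_ext HU Hp Hfg Hl. Qed.

Lemma has_pd_const c i p : has_pd (fun _ => c) i p 0.
Proof. exact: derivable_pt_lim_const. Qed.

Lemma has_pd_add f g i p : ex_pd f i p -> ex_pd g i p ->
  has_pd (fun q => f q + g q) i p (pd f i p + pd g i p).
Proof. by move=> /pd_spec Hf /pd_spec Hg; apply: derivable_pt_lim_plus Hf Hg. Qed.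

Lemma has_pd_sub_scal f g c i p : ex_pd f i p -> ex_pd g i p ->
  has_pd (fun q => f q - c * g q) i p (pd f i p - c * pd g i p).
Proof.
  move=> /pd_spec Hf /pd_spec Hg.
  exact: derivable_pt_lim_minus Hf (derivable_pt_lim_scal _ c _ _ Hg).
Qed.

Lemma has_pd_mul f g i p : ex_pd f i p -> ex_pd g i p ->
  has_pd (fun q => f q * g q) i p (pd f i p * g p + f p * pd g i p).
Proof.
  move=> /pd_spec Hf /pd_spec Hg.
  by have := derivable_pt_lim_mult _ _ _ _ _ Hf Hg; rewrite /mult_fct shift0.
Qed.

Lemma has_pd_inv f i p : ex_pd f i p -> f p <> 0 ->
  has_pd (fun q => / f q) i p (- pd f i p * (/ f p * / f p)).
Proof.
  move=> /pd_spec Hf Hn.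
  have Hn0 : f (shift p i 0) <> 0 by rewrite shift0.
  have := derivable_pt_lim_div _ _ _ _ _ (derivable_pt_lim_const 1 0) Hf Hn0.
  rewrite shift0 => H.
  have -> : (fun q => / f q) = (fun q => 1 / f q).
    by apply: functional_extensionality => q; rewrite /Rdiv Rmult_1_l.
  replace (- pd f i p * (/ f p * / f p)) with ((0 * f p - pd f i p * 1) / (f p)²) => //.
  by rewrite /Rsqr; field.
Qed.

Lemma pd_sub_scal f g c i p : ex_pd f i p -> ex_pd g i p ->
  pd (fun q => f q - c * g q) i p = pd f i p - c * pd g i p.
Proof. by move=> Hf Hg; apply/has_pd_unique/has_pd_sub_scal. Qed.

Lemma pd_sub f g i p : ex_pd f i p -> ex_pd g i p ->
  pd (fun q => f q - g q) i p = pd f i p - pd g i p.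
Proof.
  move=> Hf Hg; rewrite -[pd g i p]Rmult_1_l -(pd_sub_scal 1 Hf Hg).
  by congr pd; apply: functional_extensionality => q; ring.
Qed.

Lemma ball_min (d1 d2 : R) (q p : pt) : (forall j, Rabs (q j - p j) < Rmin d1 d2) ->
  (forall j, Rabs (q j - p j) < d1) /\ (forall j, Rabs (q j - p j) < d2).
Proof.
  by move=> H; split=> j; apply: Rlt_le_trans (H j) _; [apply: Rmin_l | apply: Rmin_r].
Qed.

Lemma cont_const U c : cont_on U (fun _ => c).
Proof.
  move=> p _ eps He; exists 1; split=> [|q _ _]; first lra.
  by rewrite Rminus_diag Rabs_R0.
Qed.

Lemma cont_ext U f g : cont_on U f -> (forall q, U q -> f q = g q) -> cont_on U g.
Proof.
  move=> Hf Hfg p Hp eps He; have [d [Hd Hd']] := Hf p Hp eps He.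
  by exists d; split=> // q Hq Hqp; rewrite -!Hfg //; apply: Hd'.
Qed.

Lemma cont_add U f g : cont_on U f -> cont_on U g -> cont_on U (fun q => f q + g q).
Proof.
  move=> Hf Hg p Hp eps He.
  have [d1 [Hd1 H1]] := Hf p Hp (eps / 2) ltac:(lra).
  have [d2 [Hd2 H2]] := Hg p Hp (eps / 2) ltac:(lra).
  exists (Rmin d1 d2); split=> [|q Hq /ball_min [Hq1 Hq2]]; first exact: Rmin_pos.
  have := Rabs_triang (f q - f p) (g q - g p); have := H1 q Hq Hq1; have := H2 q Hq Hq2.
  by replace (f q - f p + (g q - g p)) with (f q + g q - (f p + g p)) by ring; lra.
Qed.

Lemma cont_mul U f g : cont_on U f -> cont_on U g -> cont_on U (fun q => f q * g q).
Proof.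
  move=> Hf Hg p Hp eps He.
  set F := Rabs (f p); set G := Rabs (g p).
  have HF : 0 <= F by apply: Rabs_pos.
  have HG : 0 <= G by apply: Rabs_pos.
  set eta := Rmin 1 (eps / (2 * (1 + F + G))).
  have Heta1 : eta <= 1 by apply: Rmin_l.
  have Heta2 : eta * (2 * (1 + F + G)) <= eps.
    have := Rmin_r 1 (eps / (2 * (1 + F + G))); rewrite -/eta => H.
    have Hpos : 0 < 2 * (1 + F + G) by lra.
    by have := Rmult_le_compat_r _ _ _ (Rlt_le _ _ Hpos) H; rewrite /Rdiv Rmult_assoc
      Rinv_l ?Rmult_1_r; lra.
  have Heta : 0 < eta.
    by apply: Rmin_pos; [lra | apply: Rdiv_lt_0_compat; lra].
  have [d1 [Hd1 H1]] := Hf p Hp eta Heta.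
  have [d2 [Hd2 H2]] := Hg p Hp eta Heta.
  exists (Rmin d1 d2); split=> [|q Hq /ball_min [Hq1 Hq2]]; first exact: Rmin_pos.
  have A := H1 q Hq Hq1; have B := H2 q Hq Hq2.
  replace (f q * g q - f p * g p) with
    ((f q - f p) * (g q - g p) + f p * (g q - g p) + g p * (f q - f p)) by ring.
  have := Rabs_triang ((f q - f p) * (g q - g p) + f p * (g q - g p)) (g p * (f q - f p)).
  have := Rabs_triang ((f q - f p) * (g q - g p)) (f p * (g q - g p)).
  rewrite !Rabs_mult -/F -/G.
  have := Rabs_pos (f q - f p); have := Rabs_pos (g q - g p).
  nra.
Qed.

Lemma cont_inv U f : cont_on U f -> (forall q, U q -> f q <> 0) -> cont_on U (fun q => / f q).
Proof.
  move=> Hf Hn p Hp eps He.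
  set a := Rabs (f p).
  have Ha : 0 < a by apply/Rabs_pos_lt/Hn.
  have Heta : 0 < Rmin (a / 2) (eps * a * a / 2).
    by apply: Rmin_pos; [lra | have : 0 < eps * a * a by apply: Rmult_lt_0_compat; nra]; lra.
  have [d [Hd H]] := Hf p Hp _ Heta.
  exists d; split=> // q Hq Hqp.
  have F1 := H q Hq Hqp.
  have F2 : Rabs (f q - f p) < a / 2 by apply: Rlt_le_trans F1 (Rmin_l _ _).
  have F3 : Rabs (f q - f p) < eps * a * a / 2 by apply: Rlt_le_trans F1 (Rmin_r _ _).
  have Fq : a / 2 <= Rabs (f q).
    have := Rabs_triang (f p - f q) (f q); rewrite Rabs_minus_sym in F2.
    by replace (f p - f q + f q) with (f p) by ring; rewrite -/a; lra.
  have Hq0 : f q <> 0 by apply: Hn.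
  have Hp0 : f p <> 0 by apply: Hn.
  replace (/ f q - / f p) with ((f p - f q) * / (f q * f p)) by (field; split; assumption).
  rewrite Rabs_mult Rabs_inv Rabs_mult -/a Rabs_minus_sym.
  have Hqa : 0 < Rabs (f q) * a by apply: Rmult_lt_0_compat; lra.
  apply: (Rmult_lt_reg_r _ _ _ Hqa).
  rewrite Rmult_assoc Rinv_l ?Rmult_1_r; last lra.
  have : eps * a * (a / 2) <= eps * a * Rabs (f q).
    by apply: Rmult_le_compat_l => //; apply: Rmult_le_pos; lra.
  move: F3; rewrite Rabs_minus_sym; lra.
Qed.

(** Smooth functions on an open set form a ring closed under division by
    non-vanishing functions.  We prove this through the inductive class of
    functions built from smooth ones by these operations: the class is
    closed under partial differentiation (up to equality on U), so every
    member has continuous iterated partial derivatives of all orders. *)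

Lemma iter_pd_rcons l i f : iter_pd (rcons l i) f = iter_pd l (pd f i).
Proof. by rewrite -cats1 /iter_pd foldr_cat. Qed.

Lemma smooth_pd U f i : smooth_on U f -> smooth_on U (pd f i).
Proof. by move=> Hf l; rewrite -iter_pd_rcons; apply: Hf. Qed.

Lemma smooth_ex_pd U f i p : smooth_on U f -> U p -> ex_pd f i p.
Proof. by move=> Hf Hp; apply: (proj1 (Hf [::])). Qed.

Section SmoothAlgebra.

Variable U : pt -> Prop.
Hypothesis HU : is_open U.

Inductive smooth_expr : (pt -> R) -> Prop :=
| expr_smooth f : smooth_on U f -> smooth_expr f
| expr_const c : smooth_expr (fun _ => c)
| expr_add f g : smooth_expr f -> smooth_expr g -> smooth_expr (fun q => f q + g q)
| expr_mul f g : smooth_expr f -> smooth_expr g -> smooth_expr (fun q => f q * g q)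
| expr_inv f : smooth_expr f -> (forall q, U q -> f q <> 0) -> smooth_expr (fun q => / f q)
| expr_ext f g : smooth_expr f -> (forall q, U q -> f q = g q) -> smooth_expr g.

Lemma smooth_expr_step f : smooth_expr f ->
  [/\ cont_on U f, forall p, U p -> forall i, ex_pd f i p
    & forall i, smooth_expr (pd f i)].
Proof.
  elim=> {f}.
  - move=> f Hf; split; [exact: (proj2 (Hf [::])) | exact: (proj1 (Hf [::])) |].
    by move=> i; apply/expr_smooth/smooth_pd.
  - move=> c; split; [exact: cont_const | by move=> p _ i; exists 0; apply: has_pd_const |].
    move=> i; apply: (expr_ext (expr_const 0)) => q _.
    by rewrite (has_pd_unique (has_pd_const c i q)).
  - move=> f g _ [Cf Df Pf] _ [Cg Dg Pg]; split; first exact: cont_add.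
    + by move=> p Hp i; eexists; apply: has_pd_add; auto.
    + move=> i; apply: (expr_ext (expr_add (Pf i) (Pg i))) => q Hq.
      by rewrite (has_pd_unique (has_pd_add (Df q Hq i) (Dg q Hq i))).
  - move=> f g Hf [Cf Df Pf] Hg [Cg Dg Pg]; split; first exact: cont_mul.
    + by move=> p Hp i; eexists; apply: has_pd_mul; auto.
    + move=> i; apply: (expr_ext (expr_add (expr_mul (Pf i) Hg) (expr_mul Hf (Pg i)))) => q Hq.
      by rewrite (has_pd_unique (has_pd_mul (Df q Hq i) (Dg q Hq i))).
  - move=> f Hf [Cf Df Pf] Hn; split; first exact: cont_inv.
    + by move=> p Hp i; eexists; apply: has_pd_inv; auto.
    + move=> i; have Hinv := expr_inv Hf Hn.
      apply: (expr_ext (expr_mul (expr_mul (expr_const (-1)) (Pf i)) (expr_mul Hinv Hinv))).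
      by move=> q Hq; rewrite (has_pd_unique (has_pd_inv (Df q Hq i) (Hn q Hq))); ring.
  - move=> f g _ [Cf Df Pf] Hfg; split; first exact: cont_ext Hfg.
    + by move=> p Hp i; apply: ex_pd_open_ext HU Hp Hfg (Df p Hp i).
    + move=> i; apply: (expr_ext (Pf i)) => q Hq; exact: pd_open_ext HU Hq Hfg.
Qed.

Lemma smooth_expr_smooth f : smooth_expr f -> smooth_on U f.
Proof.
  move=> Hf l.
  have Hl : smooth_expr (iter_pd l f).
    by elim: l => [|i l IH] //=; case: (smooth_expr_step IH).
  by case: (smooth_expr_step Hl).
Qed.

Lemma smooth_const c : smooth_on U (fun _ => c).
Proof. exact/smooth_expr_smooth/expr_const. Qed.

Lemma smooth_add f g : smooth_on U f -> smooth_on U g -> smooth_on U (fun q => f q + g q).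
Proof. by move=> Hf Hg; apply/smooth_expr_smooth/expr_add; apply: expr_smooth. Qed.

Lemma smooth_mul f g : smooth_on U f -> smooth_on U g -> smooth_on U (fun q => f q * g q).
Proof. by move=> Hf Hg; apply/smooth_expr_smooth/expr_mul; apply: expr_smooth. Qed.

Lemma smooth_inv f : smooth_on U f -> (forall q, U q -> f q <> 0) ->
  smooth_on U (fun q => / f q).
Proof. by move=> Hf Hn; apply/smooth_expr_smooth/expr_inv => //; apply: expr_smooth. Qed.

Lemma smooth_ext f g : smooth_on U f -> (forall q, U q -> f q = g q) -> smooth_on U g.
Proof. by move=> Hf Hfg; apply/smooth_expr_smooth/(expr_ext (expr_smooth Hf)). Qed.

Lemma smooth_sub_scal f g c : smooth_on U f -> smooth_on U g ->
  smooth_on U (fun q => f q - c * g q).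
Proof.
  move=> Hf Hg; apply: (smooth_ext (smooth_add Hf (smooth_mul (smooth_const (- c)) Hg))).
  by move=> q _; ring.
Qed.

Lemma smooth_opp f : smooth_on U f -> smooth_on U (fun q => - f q).
Proof.
  move=> Hf; apply: (smooth_ext (smooth_sub_scal 1 (smooth_const 0) Hf)).
  by move=> q _; ring.
Qed.

Lemma smooth_div f g : smooth_on U f -> smooth_on U g -> (forall q, U q -> g q <> 0) ->
  smooth_on U (fun q => f q / g q).
Proof. by move=> Hf Hg Hn; apply: (smooth_mul Hf (smooth_inv Hg Hn)). Qed.

End SmoothAlgebra.

(** Symmetry of second partial derivatives (Schwarz-Clairaut) for smooth
    functions, via the mean value theorem applied twice to the second
    difference f(p+he_a+ke_b) - f(p+he_a) - f(p+ke_b) + f(p). *)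

Lemma derivable_along (F : pt -> R) a (phi : R -> pt) c :
  (forall u, phi (c + u) = shift (phi c) a u) -> ex_pd F a (phi c) ->
  derivable_pt_lim (fun s => F (phi s)) c (pd F a (phi c)).
Proof.
  move=> Hphi /pd_spec H eps He; have [d Hd] := H eps He.
  by exists d => h Hh0 Hh; have := Hd h Hh0 Hh; rewrite Rplus_0_l shift0 Hphi.
Qed.

Lemma second_difference_mvt U f p r a b h k : smooth_on U f -> 0 < r ->
  (forall q, (forall j, Rabs (q j - p j) < r) -> U q) ->
  0 < h < r / 2 -> 0 < k < r / 2 ->
  exists xi eta, 0 < xi < h /\ 0 < eta < k /\
    f (shift (shift p a h) b k) - f (shift p a h) - f (shift p b k) + f p
    = h * k * pd (pd f a) b (shift (shift p a xi) b eta).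
Proof.
  move=> Hf Hr Hball Hh Hk.
  have inU s t : 0 <= s <= h -> 0 <= t <= k -> U (shift (shift p a s) b t).
    move=> Hs Ht; apply: Hball => j; apply: Rle_lt_trans (shift2_dist _ _ _ _ _ _) _.
    by rewrite !Rabs_right; lra.
  have inU1 s : 0 <= s <= h -> U (shift p a s).
    by move=> Hs; have := inU s 0 Hs ltac:(lra); rewrite shift0.
  pose g s := f (shift (shift p a s) b k) - f (shift p a s).
  pose g' s := pd f a (shift (shift p a s) b k) - pd f a (shift p a s).
  have Hg c : 0 <= c <= h -> derivable_pt_lim g c (g' c).
    move=> Hc; apply: derivable_pt_lim_minus.
    - apply: (derivable_along (phi := fun s => shift (shift p a s) b k)).
      + by move=> u; rewrite -shift_add shift_comm.
      + by apply: smooth_ex_pd Hf _; apply: inU; lra.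
    - apply: (derivable_along (phi := fun s => shift p a s)).
      + by move=> u; rewrite -shift_add.
      + by apply: smooth_ex_pd Hf _; apply: inU1; lra.
  have [xi [Exi Hxi]] := MVT_cor2 g g' 0 h ltac:(lra) Hg.
  pose m t := pd f a (shift (shift p a xi) b t).
  pose m' t := pd (pd f a) b (shift (shift p a xi) b t).
  have Hm c : 0 <= c <= k -> derivable_pt_lim m c (m' c).
    move=> Hc; apply: (derivable_along (phi := fun t => shift (shift p a xi) b t)).
    + by move=> u; rewrite -shift_add.
    + by apply: smooth_ex_pd (smooth_pd a Hf) _; apply: inU; lra.
  have [eta [Eeta Heta]] := MVT_cor2 m m' 0 k ltac:(lra) Hm.
  exists xi, eta; split=> //; split=> //.
  move: Exi Eeta; rewrite /g /g' /m /m' !shift0 !Rminus_0_r => Exi Eeta.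
  have -> : f (shift (shift p a h) b k) - f (shift p a h) - f (shift p b k) + f p
    = (pd f a (shift (shift p a xi) b k) - pd f a (shift p a xi)) * h by lra.
  by rewrite Eeta; ring.
Qed.

Lemma small_eq x y : (forall eps, 0 < eps -> Rabs (x - y) < 2 * eps) -> x = y.
Proof.
  move=> H; case: (Req_dec (x - y) 0) => Hz; first lra.
  have Ha : 0 < Rabs (x - y) by apply: Rabs_pos_lt.
  by have := H (Rabs (x - y) / 4) ltac:(lra); lra.
Qed.

Lemma clairaut U f a b p : is_open U -> smooth_on U f -> U p ->
  pd (pd f a) b p = pd (pd f b) a p.
Proof.
  move=> HU Hf Hp.
  have [r [Hr Hball]] := HU p Hp.
  apply: small_eq => eps He.
  have [d1 [Hd1 H1]] := proj2 (Hf [:: b; a]) p Hp eps He.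
  have [d2 [Hd2 H2]] := proj2 (Hf [:: a; b]) p Hp eps He.
  set h := Rmin (r / 2) (Rmin d1 d2) / 2.
  have Hm : 0 < Rmin (r / 2) (Rmin d1 d2) by apply: Rmin_pos; [lra | apply: Rmin_pos].
  have Hh : 0 < h < r / 2 by have := Rmin_l (r / 2) (Rmin d1 d2); rewrite /h; lra.
  have Hhd : 2 * h <= Rmin d1 d2 by have := Rmin_r (r / 2) (Rmin d1 d2); rewrite /h; lra.
  have [xi [eta [Hxi [Heta E1]]]] := second_difference_mvt a b Hf Hr Hball Hh Hh.
  have [xi' [eta' [Hxi' [Heta' E2]]]] := second_difference_mvt b a Hf Hr Hball Hh Hh.
  rewrite (shift_comm p b a h h) in E2.
  (* both mean-value points lie within 2h of p, hence inside U and close enough *)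
  have close s t c c' j : 0 < s < h -> 0 < t < h ->
      Rabs (shift (shift p c s) c' t j - p j) < 2 * h.
    move=> Hs Ht; apply: Rle_lt_trans (shift2_dist _ _ _ _ _ _) _.
    by rewrite !Rabs_right; lra.
  have inU s t c c' : 0 < s < h -> 0 < t < h -> U (shift (shift p c s) c' t).
    by move=> Hs Ht; apply: Hball => j; have := close _ _ c c' j Hs Ht; lra.
  have A1 := H1 _ (inU _ _ a b Hxi Heta) (fun j =>
    Rlt_le_trans _ _ _ (close _ _ a b j Hxi Heta) (Rle_trans _ _ _ Hhd (Rmin_l _ _))).
  have A2 := H2 _ (inU _ _ b a Hxi' Heta') (fun j =>
    Rlt_le_trans _ _ _ (close _ _ b a j Hxi' Heta') (Rle_trans _ _ _ Hhd (Rmin_r _ _))).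
  have Hhh : h * h <> 0 by apply: Rmult_integral_contrapositive_currified; lra.
  have E : pd (pd f a) b (shift (shift p a xi) b eta)
         = pd (pd f b) a (shift (shift p b xi') a eta').
    by apply: (Rmult_eq_reg_l (h * h)) => //; rewrite -E1 -E2; ring.
  rewrite /= E in A1; simpl in A2.
  have [B1 B2] := Rabs_def2 _ _ A1; have [B3 B4] := Rabs_def2 _ _ A2.
  by apply: Rabs_def1; lra.
Qed.

(** The operators D_i = d/dy^i - lam d/dx^i and first-order operators
    sum_k a_k D_k.  Since the D_i commute on smooth functions, the
    commutator of two first-order operators is again first order. *)

Section FirstOrderOperators.

Variables (U : pt -> Prop) (lam : R).
Hypothesis HU : is_open U.

Lemma smooth_Dop i f : smooth_on U f -> smooth_on U (Dop lam i f).
Proof. by move=> Hf; exact: (smooth_sub_scal HU lam (smooth_pd _ Hf) (smooth_pd _ Hf)). Qed.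

Lemma Dop_add j f g p : smooth_on U f -> smooth_on U g -> U p ->
  Dop lam j (fun q => f q + g q) p = Dop lam j f p + Dop lam j g p.
Proof.
  move=> Hf Hg Hp; have E c := has_pd_unique (has_pd_add (smooth_ex_pd c Hf Hp)
    (smooth_ex_pd c Hg Hp)).
  by rewrite /Dop !E; ring.
Qed.

Lemma Dop_mul j f g p : smooth_on U f -> smooth_on U g -> U p ->
  Dop lam j (fun q => f q * g q) p = Dop lam j f p * g p + f p * Dop lam j g p.
Proof.
  move=> Hf Hg Hp; have E c := has_pd_unique (has_pd_mul (smooth_ex_pd c Hf Hp)
    (smooth_ex_pd c Hg Hp)).
  by rewrite /Dop !E; ring.
Qed.

Lemma Dop_sum_mul3 j f1 g1 f2 g2 f3 g3 p :
  smooth_on U f1 -> smooth_on U g1 -> smooth_on U f2 -> smooth_on U g2 ->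
  smooth_on U f3 -> smooth_on U g3 -> U p ->
  Dop lam j (fun q => f1 q * g1 q + f2 q * g2 q + f3 q * g3 q) p
  = Dop lam j f1 p * g1 p + f1 p * Dop lam j g1 p
  + (Dop lam j f2 p * g2 p + f2 p * Dop lam j g2 p)
  + (Dop lam j f3 p * g3 p + f3 p * Dop lam j g3 p).
Proof.
  move=> Hf1 Hg1 Hf2 Hg2 Hf3 Hg3 Hp.
  have M12 := smooth_add HU (smooth_mul HU Hf1 Hg1) (smooth_mul HU Hf2 Hg2).
  rewrite !Dop_add ?Dop_mul //; exact: (smooth_mul HU).
Qed.

Lemma Dop_vanishing j f p : (forall q, U q -> f q = 0) -> U p -> Dop lam j f p = 0.
Proof.
  move=> Hf Hp.
  have E c : pd f c p = 0.
    rewrite -(has_pd_unique (has_pd_const 0 c p)).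
    by apply: pd_open_ext HU Hp _ => q Hq; rewrite Hf.
  by rewrite /Dop !E; ring.
Qed.

Lemma Dop_comm i j psi p : smooth_on U psi -> U p ->
  Dop lam j (Dop lam i psi) p = Dop lam i (Dop lam j psi) p.
Proof.
  move=> Hpsi Hp.
  have Ex c c' : ex_pd (pd psi c) c' p by apply: smooth_ex_pd (smooth_pd _ Hpsi) Hp.
  rewrite /Dop !pd_sub_scal //.
  rewrite (clairaut (yc i) (yc j) HU Hpsi Hp) (clairaut (xc i) (yc j) HU Hpsi Hp)
          (clairaut (yc i) (xc j) HU Hpsi Hp) (clairaut (xc i) (xc j) HU Hpsi Hp).
  ring.
Qed.

Definition first_order (a : nat -> pt -> R) (psi : pt -> R) : pt -> R :=
  fun p => a 1%N p * Dop lam 1 psi p + a 2%N p * Dop lam 2 psi p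
         + a 3%N p * Dop lam 3 psi p + a 4%N p * Dop lam 4 psi p.

Lemma smooth_first_order a psi : (forall k, smooth_on U (a k)) -> smooth_on U psi ->
  smooth_on U (first_order a psi).
Proof.
  move=> Ha Hpsi.
  have T k i : smooth_on U (fun q => a k q * Dop lam i psi q).
    exact: (smooth_mul HU (Ha k) (smooth_Dop i Hpsi)).
  exact: (smooth_add HU (smooth_add HU (smooth_add HU (T _ _) (T _ _)) (T _ _)) (T _ _)).
Qed.

Lemma Dop_first_order j a psi p : (forall k, smooth_on U (a k)) -> smooth_on U psi -> U p ->
  Dop lam j (first_order a psi) p
  = first_order (fun k => Dop lam j (a k)) psi p + first_order a (Dop lam j psi) p.
Proof.
  move=> Ha Hpsi Hp.
  have T k i : smooth_on U (fun q => a k q * Dop lam i psi q).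
    exact: (smooth_mul HU (Ha k) (smooth_Dop i Hpsi)).
  have T2 := smooth_add HU (T 1%N 1%N) (T 2%N 2%N).
  have T3 := smooth_add HU T2 (T 3%N 3%N).
  rewrite {1}/first_order !Dop_add // !Dop_mul //; try exact: smooth_Dop.
  by rewrite /first_order !(Dop_comm j _ Hpsi Hp); ring.
Qed.

Lemma first_order_commutator a b psi p :
  (forall k, smooth_on U (a k)) -> (forall k, smooth_on U (b k)) -> smooth_on U psi -> U p ->
  first_order a (first_order b psi) p - first_order b (first_order a psi) p
  = first_order (fun k q => first_order a (b k) q - first_order b (a k) q) psi p.
Proof.
  move=> Ha Hb Hpsi Hp.
  rewrite {1 3}/first_order !Dop_first_order //.
  rewrite /first_order (Dop_comm 1 2) ?(Dop_comm 1 3) ?(Dop_comm 1 4)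
          ?(Dop_comm 2 3) ?(Dop_comm 2 4) ?(Dop_comm 3 4) //.
  ring.
Qed.

End FirstOrderOperators.

Lemma pd3_swap23 U f a b c p : is_open U -> smooth_on U f -> U p ->
  pd (pd (pd f a) b) c p = pd (pd (pd f a) c) b p.
Proof. by move=> HU Hf Hp; apply: (clairaut b c HU (smooth_pd a Hf) Hp). Qed.

Lemma pd3_swap12 U f a b c p : is_open U -> smooth_on U f -> U p ->
  pd (pd (pd f a) b) c p = pd (pd (pd f b) a) c p.
Proof.
  move=> HU Hf Hp.
  exact: (pd_open_ext c HU Hp (fun q Hq => clairaut a b HU Hf Hq)).
Qed.

Lemma pd3_swap13 U f a b c p : is_open U -> smooth_on U f -> U p ->
  pd (pd (pd f a) b) c p = pd (pd (pd f c) b) a p.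
Proof.
  move=> HU Hf Hp.
  by rewrite (pd3_swap23 _ _ _ HU Hf Hp) (pd3_swap12 _ _ _ HU Hf Hp) (pd3_swap23 _ _ _ HU Hf Hp).
Qed.

(** The TED equation.  The Pfaffian of the skew matrix (omega_ik) is the
    left-hand side of the equation; omega is skew and D-closed. *)

Definition pfaffian (Th : pt -> R) : pt -> R :=
  fun q => omega Th 1 2 q * omega Th 3 4 q + omega Th 2 3 q * omega Th 1 4 q
         + omega Th 3 1 q * omega Th 2 4 q.

Lemma omega_anti Th i k q : omega Th k i q = - omega Th i k q.
Proof. by rewrite /omega; ring. Qed.

Section TED.

Variables (U : pt -> Prop) (Th : pt -> R) (lam : R).
Hypothesis HU : is_open U.
Hypothesis HTh : smooth_on U Th.

Lemma smooth_omega i k : smooth_on U (omega Th i k).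
Proof.
  have H := smooth_sub_scal HU 1 (smooth_pd (yc k) (smooth_pd (xc i) HTh))
                                 (smooth_pd (yc i) (smooth_pd (xc k) HTh)).
  by apply: (smooth_ext HU H) => q _; rewrite /omega; ring.
Qed.

Lemma pd_omega i k c p : U p ->
  pd (omega Th i k) c p
  = pd (pd (pd Th (xc i)) (yc k)) c p - pd (pd (pd Th (xc k)) (yc i)) c p.
Proof.
  move=> Hp; apply: pd_sub; apply: smooth_ex_pd Hp.
  all: exact: (smooth_pd _ (smooth_pd _ HTh)).
Qed.

Lemma Dop_omega_anti j i k p : U p ->
  Dop lam j (omega Th k i) p = - Dop lam j (omega Th i k) p.
Proof. by move=> Hp; rewrite /Dop !pd_omega //; ring. Qed.

(* Closedness (omega is a "D-exact" 2-form): D_j w_ik + D_i w_kj + D_k w_ji = 0, by symmetry of third derivatives. *)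
Lemma omega_closed j i k p : U p ->
  Dop lam j (omega Th i k) p + Dop lam i (omega Th k j) p + Dop lam k (omega Th j i) p = 0.
Proof.
  move=> Hp; rewrite /Dop !pd_omega //.
  rewrite (pd3_swap23 (xc i) (yc k) (yc j) HU HTh Hp)
          (pd3_swap23 (xc k) (yc j) (yc i) HU HTh Hp)
          (pd3_swap23 (xc j) (yc i) (yc k) HU HTh Hp).
  rewrite (pd3_swap13 (xc i) (yc k) (xc j) HU HTh Hp)
          (pd3_swap13 (xc k) (yc j) (xc i) HU HTh Hp)
          (pd3_swap13 (xc j) (yc i) (xc k) HU HTh Hp).
  ring.
Qed.

Lemma omega_closed_solved p : U p ->
  [/\ Dop lam 3 (omega Th 1 2) p = Dop lam 2 (omega Th 1 3) p - Dop lam 1 (omega Th 2 3) p,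
      Dop lam 4 (omega Th 1 2) p = Dop lam 2 (omega Th 1 4) p - Dop lam 1 (omega Th 2 4) p,
      Dop lam 4 (omega Th 2 3) p = Dop lam 3 (omega Th 2 4) p - Dop lam 2 (omega Th 3 4) p
    & Dop lam 4 (omega Th 1 3) p = Dop lam 3 (omega Th 1 4) p - Dop lam 1 (omega Th 3 4) p].
Proof.
  move=> Hp.
  have := omega_closed 3 1 2 Hp; have := omega_closed 4 1 2 Hp.
  have := omega_closed 4 2 3 Hp; have := omega_closed 4 1 3 Hp.
  rewrite (Dop_omega_anti 2 1 3 Hp) (Dop_omega_anti 2 1 4 Hp)
          (Dop_omega_anti 3 2 4 Hp) (Dop_omega_anti 3 1 4 Hp).
  by split; lra.
Qed.

Lemma Dop_pfaffian j p : U p ->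
  Dop lam j (pfaffian Th) p
  = Dop lam j (omega Th 1 2) p * omega Th 3 4 p + omega Th 1 2 p * Dop lam j (omega Th 3 4) p
  + (Dop lam j (omega Th 2 3) p * omega Th 1 4 p + omega Th 2 3 p * Dop lam j (omega Th 1 4) p)
  + (Dop lam j (omega Th 3 1) p * omega Th 2 4 p + omega Th 3 1 p * Dop lam j (omega Th 2 4) p).
Proof.
  move=> Hp; have W := smooth_omega.
  exact: (Dop_sum_mul3 lam HU j (W 1%N 2%N) (W 3%N 4%N) (W 2%N 3%N) (W 1%N 4%N)
                                (W 3%N 1%N) (W 2%N 4%N) Hp).
Qed.

(* The defect of the D_1 and D_2 coefficients of [X3, X4] from
   alpha a_k + beta b_k, multiplied by w12, is a combination of P and D_l P
   (for any Theta; only the closedness relations are used). *)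
Lemma compatibility_defect_1 p : U p ->
  omega Th 1 2 p * (X3 Th lam (omega Th 2 4) p - X4 Th lam (omega Th 2 3) p)
  - X3 Th lam (omega Th 1 2) p * omega Th 2 4 p + X4 Th lam (omega Th 1 2) p * omega Th 2 3 p
  = omega Th 1 2 p * Dop lam 2 (pfaffian Th) p - Dop lam 2 (omega Th 1 2) p * pfaffian Th p.
Proof.
  move=> Hp; have [E312 E412 E423 _] := omega_closed_solved Hp.
  rewrite Dop_pfaffian // /pfaffian /X3 /X4.
  rewrite ?(omega_anti Th 1 3) ?(omega_anti Th 1 4).
  rewrite ?(Dop_omega_anti _ 1 3 Hp) ?(Dop_omega_anti _ 1 4 Hp) E312 E412 E423.
  ring.
Qed.

Lemma compatibility_defect_2 p : U p ->
  omega Th 1 2 p * (X3 Th lam (omega Th 4 1) p - X4 Th lam (omega Th 3 1) p)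
  - X3 Th lam (omega Th 1 2) p * omega Th 4 1 p + X4 Th lam (omega Th 1 2) p * omega Th 3 1 p
  = Dop lam 1 (omega Th 1 2) p * pfaffian Th p - omega Th 1 2 p * Dop lam 1 (pfaffian Th) p.
Proof.
  move=> Hp; have [E312 E412 _ E413] := omega_closed_solved Hp.
  rewrite Dop_pfaffian // /pfaffian /X3 /X4.
  rewrite ?(omega_anti Th 1 3) ?(omega_anti Th 1 4).
  rewrite ?(Dop_omega_anti _ 1 3 Hp) ?(Dop_omega_anti _ 1 4 Hp) E312 E412 E413.
  ring.
Qed.

End TED.

Definition X3_coef (Th : pt -> R) (k : nat) : pt -> R :=
  match k with
  | 1 => omega Th 2 3 | 2 => omega Th 3 1 | 3 => omega Th 1 2 | _ => fun _ => 0
  end.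

Definition X4_coef (Th : pt -> R) (k : nat) : pt -> R :=
  match k with
  | 1 => omega Th 2 4 | 2 => omega Th 4 1 | 4 => omega Th 1 2 | _ => fun _ => 0
  end.

Lemma X3_first_order Th lam : X3 Th lam = first_order lam (X3_coef Th).
Proof.
  apply: functional_extensionality => psi; apply: functional_extensionality => p.
  by rewrite /X3 /first_order /=; ring.
Qed.

Lemma X4_first_order Th lam : X4 Th lam = first_order lam (X4_coef Th).
Proof.
  apply: functional_extensionality => psi; apply: functional_extensionality => p.
  by rewrite /X4 /first_order /=; ring.
Qed.

(* The coefficients of [X3, X4] = alpha X3 + beta X4, read off on the D_3, D_4 components. *)
Definition lax_alpha (Th : pt -> R) (lam : R) : pt -> R :=
  fun q => - (X4 Th lam (omega Th 1 2) q / omega Th 1 2 q).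

Definition lax_beta (Th : pt -> R) (lam : R) : pt -> R :=
  fun q => X3 Th lam (omega Th 1 2) q / omega Th 1 2 q.

Section Compatibility.

Variables (U : pt -> Prop) (Th : pt -> R) (lam : R).
Hypothesis HU : is_open U.
Hypothesis HTh : smooth_on U Th.

Lemma smooth_X3_coef k : smooth_on U (X3_coef Th k).
Proof. by case: k => [|[|[|[|k]]]] /=; apply: smooth_omega || apply: smooth_const. Qed.

Lemma smooth_X4_coef k : smooth_on U (X4_coef Th k).
Proof. by case: k => [|[|[|[|[|k]]]]] /=; apply: smooth_omega || apply: smooth_const. Qed.

Lemma smooth_X3 f : smooth_on U f -> smooth_on U (X3 Th lam f).
Proof.
  by move=> Hf; rewrite X3_first_order; exact: (smooth_first_order lam HU smooth_X3_coef Hf).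
Qed.

Lemma smooth_X4 f : smooth_on U f -> smooth_on U (X4 Th lam f).
Proof.
  by move=> Hf; rewrite X4_first_order; exact: (smooth_first_order lam HU smooth_X4_coef Hf).
Qed.

Lemma X3_X4_commutator psi p : smooth_on U psi -> U p ->
  X3 Th lam (X4 Th lam psi) p - X4 Th lam (X3 Th lam psi) p
  = first_order lam (fun k q => X3 Th lam (X4_coef Th k) q - X4 Th lam (X3_coef Th k) q) psi p.
Proof.
  move=> Hpsi Hp; rewrite X3_first_order X4_first_order.
  exact: first_order_commutator smooth_X3_coef smooth_X4_coef Hpsi Hp.
Qed.

Hypothesis Hted : forall p, U p -> pfaffian Th p = 0.
Hypothesis Hnz : forall p, U p -> omega Th 1 2 p <> 0.

(* Each coefficient of the commutator is alpha a_k + beta b_k: trivially for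
   k = 3, 4 by the choice of alpha, beta, and for k = 1, 2 by the defect
   identities, whose right-hand sides vanish with the Pfaffian. *)
Lemma commutator_coefficients k p : U p ->
  X3 Th lam (X4_coef Th k) p - X4 Th lam (X3_coef Th k) p
  = lax_alpha Th lam p * X3_coef Th k p + lax_beta Th lam p * X4_coef Th k p.
Proof.
  move=> Hp; have Hw := Hnz Hp; have P0 := Hted Hp.
  have DP j : Dop lam j (pfaffian Th) p = 0 := Dop_vanishing lam HU j Hted Hp.
  have D0 j : Dop lam j (fun _ => 0) p = 0 := Dop_vanishing lam HU j (fun q _ => erefl) Hp.
  have X3_0 : X3 Th lam (fun _ => 0) p = 0 by rewrite /X3 !D0; ring.
  have X4_0 : X4 Th lam (fun _ => 0) p = 0 by rewrite /X4 !D0; ring.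
  rewrite /lax_alpha /lax_beta.
  case: k => [|[|[|[|[|k]]]]] /=; rewrite ?X3_0 ?X4_0; try by field.
  - have := compatibility_defect_1 lam HU HTh Hp; rewrite DP P0 => E.
    by apply: (Rmult_eq_reg_l (omega Th 1 2 p)) => //; field_simplify; lra.
  - have := compatibility_defect_2 lam HU HTh Hp; rewrite DP P0 => E.
    by apply: (Rmult_eq_reg_l (omega Th 1 2 p)) => //; field_simplify; lra.
Qed.

End Compatibility.

Unset Implicit Arguments.

Theorem theorem1 (U : pt -> Prop) (Th : pt -> R) (lam : R) :
  is_open U ->
  smooth_on U Th ->
  (forall p, U p ->
     omega Th 1 2 p * omega Th 3 4 p + omega Th 2 3 p * omega Th 1 4 p
     + omega Th 3 1 p * omega Th 2 4 p = 0) ->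
  (forall p, U p -> omega Th 1 2 p <> 0) ->
  exists alpha beta : pt -> R,
    smooth_on U alpha /\ smooth_on U beta /\
    forall psi : pt -> R, smooth_on U psi ->
      forall p, U p ->
        X3 Th lam (X4 Th lam psi) p - X4 Th lam (X3 Th lam psi) p
        = alpha p * X3 Th lam psi p + beta p * X4 Th lam psi p.
Proof.
  move=> HU HTh Hted Hnz.
  have Hw := smooth_omega HU HTh 1 2.
  exists (lax_alpha Th lam), (lax_beta Th lam); split; [|split].
  - exact: (smooth_opp HU (smooth_div HU (smooth_X4 lam HU HTh Hw) Hw Hnz)).
  - exact: (smooth_div HU (smooth_X3 lam HU HTh Hw) Hw Hnz).
  move=> psi Hpsi p Hp.
  rewrite (X3_X4_commutator lam HU HTh Hpsi Hp) /first_order; cbv beta.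
  rewrite !(commutator_coefficients lam HU HTh Hted Hnz _ Hp).
  by rewrite /X3 /X4 /=; ring.
Qed.
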